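(* Let $L$ be a geometric lattice of rank $r+1$ with $n$ atoms. Then for all $S\subseteq[r]$, $f_S(L)\le f_S(\mathscr{B}_{r+1,n})$.
   Context: A geometric lattice is a finite graded atomic lattice whose rank function $\rho$ satisfies $\rho(x\vee y)+\rho(x\wedge y)\le \rho(x)+\rho(y)$. For a graded poset $P$ of rank $r+1$ with $\hat 0,\hat 1$ and $S\subseteq[r]=\{1,\dots,r\}$, $f_S(P)$ is the number of chains in $P$ whose elements have ranks exactly the elements of $S$. The truncated Boolean algebra $\mathscr{B}_{r+1,n}$ ($n\ge r+1$) is the poset of all subsets of $[n]$ of cardinality at most $r$, ordered by inclusion, together with an added maximum element $\hat 1$. *)

From mathcomp Require Import all_boot all_order.
Set Implicit Arguments. Unset Strict Implicit. Unset Printing Implicit Defensive.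
Import Order.Theory.
Local Open Scope order_scope.

(* Ranks S are encoded as a
   set of ordinals [S : {set 'I_k}] (ordinals read as natural numbers).       *)

Definition chainb (T : finType) (le : rel T) (C : {set T}) : bool :=
  [forall x in C, forall y in C, le x y || le y x].

Definition ranks_eq (T : finType) (rk : T -> nat) (k : nat)
    (C : {set T}) (S : {set 'I_k}) : bool :=
  [forall c in C, exists i in S, rk c == val i] &&
  [forall i in S, exists c in C, rk c == val i].

Definition fS (T : finType) (P : pred T) (le : rel T) (rk : T -> nat)
    (k : nat) (S : {set 'I_k}) : nat :=
  #|[set C : {set T} | [&& C \subset P, chainb le C & ranks_eq rk C S]]|.

Section Geometric.
Context {d : Order.disp_t} (L : finTBLatticeType d).

Definition covers (x y : L) : bool := (x < y) && [forall z, ~~ ((x < z) && (z < y))].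

Definition atom (a : L) : bool := covers \bot a.

Definition is_rank_function (rho : L -> nat) : Prop :=
  rho \bot = 0%N /\ (forall x y : L, covers x y -> rho y = (rho x).+1).

Definition atomic_lattice : Prop :=
  forall x : L, x = \join_(a : L | atom a && (a <= x)) a.

Definition geometric (rho : L -> nat) : Prop :=
  [/\ is_rank_function rho, atomic_lattice &
      forall x y : L, (rho (x `|` y) + rho (x `&` y) <= rho x + rho y)%N].

End Geometric.

(* carrier: subsets of [n] (here 'I_n) of size at most r, plus a top [None] *)
Definition trB_carrier (r n : nat) : pred (option {set 'I_n}) :=
  fun o => if o is Some A then (#|A| <= r)%N else true.

Definition trB_le (n : nat) : rel (option {set 'I_n}) :=
  fun o1 o2 => match o1, o2 with
               | _, None => true
               | None, Some _ => false
               | Some A, Some B => A \subset B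
               end.

Definition trB_rank (r n : nat) (o : option {set 'I_n}) : nat :=
  if o is Some A then #|A| else r.+1.

(* Every chain x_1 < ... < x_k of a geometric lattice L lifts to a chain
   A_1 \subset ... \subset A_k of independent sets of atoms, with \join A_i = x_i
   and #|A_i| = rho x_i: a basis of x_(i-1) is extended to one of x_i by adding,
   one at a time, atoms below x_i that are not below the current join, and each
   such atom raises the rank by exactly one by semimodularity.  Since the ranks
   in S are at most r, every lift is a chain of B_(r+1,n) avoiding its top, with
   rank set S; the map A |-> \join A then sends the chains counted by
   f_S(B_(r+1,n)) onto those counted by f_S(L).  Neither rho \top = r.+1 nor
   0 \notin S is needed. *)

From mathcomp Require Import all_boot all_order.
From mathcomp Require Import zify.
Import Order.Theory.

Local Open Scope order_scope.

Section Chains.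
Context {T U : finType}.

Lemma chainb_imset (f : T -> U) (le : rel U) (D : {set T}) :
  chainb le (f @: D) = chainb (fun x y => le (f x) (f y)) D.
Proof.
apply/forallP/forallP => [H x | H u].
- apply/implyP => xD; apply/forallP => y; apply/implyP => yD.
  by move: (H (f x)) => /implyP /(_ (imset_f f xD)) /forallP /(_ (f y))
    /implyP /(_ (imset_f f yD)).
- apply/implyP => /imsetP[x xD ->]; apply/forallP => v.
  apply/implyP => /imsetP[y yD ->].
  by move: (H x) => /implyP /(_ xD) /forallP /(_ y) /implyP /(_ yD).
Qed.

Lemma ranks_eq_imset {f : T -> U} {rkT : T -> nat} {rkU : U -> nat} {k}
    {D : {set T}} {S : {set 'I_k}} :
  {in D, forall x, rkT x = rkU (f x)} ->
  ranks_eq rkU (f @: D) S = ranks_eq rkT D S.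
Proof.
move=> rkf; congr andb.
- apply/forallP/forallP => [H x | H u].
  + apply/implyP => xD; rewrite rkf //.
    by move: (H (f x)) => /implyP /(_ (imset_f f xD)).
  + apply/implyP => /imsetP[x xD ->].
    by move: (H x) => /implyP /(_ xD); rewrite rkf.
- apply/forallP/forallP => H i; apply/implyP => iS;
    move: (H i) => /implyP /(_ iS) /existsP[c /andP[cD /eqP rc]].
  + case/imsetP: cD rc => x xD -> rc.
    by apply/existsP; exists x; rewrite xD /= rkf // rc.
  + by apply/existsP; exists (f c); rewrite imset_f //= -rkf // rc.
Qed.

Lemma chainbS {le : rel T} {C D : {set T}} :
  C \subset D -> chainb le D -> chainb le C.
Proof.
move=> /subsetP CD /forallP chD; apply/forallP => x; apply/implyP => xC.
apply/forallP => y; apply/implyP => yC.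
by move: (chD x) => /implyP /(_ (CD x xC)) /forallP /(_ y) /implyP /(_ (CD y yC)).
Qed.

Lemma chainbU1 {le : rel T} {x : T} {D : {set T}} : reflexive le ->
  {in D, forall y, le x y} -> chainb le D -> chainb le (x |: D).
Proof.
move=> le_refl xD /forallP chD; apply/forallP => y; apply/implyP.
case/setU1P => [-> | yD]; apply/forallP => z; apply/implyP.
  by case/setU1P => [-> | /xD ->]; rewrite ?le_refl.
case/setU1P => [-> | zD]; first by rewrite xD ?orbT.
by move: (chD y) => /implyP /(_ yD) /forallP /(_ z) /implyP /(_ zD).
Qed.

Lemma exists_ord_enumeration {A : {set T}} {n} : #|A| = n ->
  exists g : 'I_n -> T, (forall i, g i \in A) /\ (forall x, x \in A -> exists i, g i = x).
Proof.
move=> cardA; exists (fun i => enum_val (cast_ord (esym cardA) i)); split.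
  by move=> i; apply: enum_valP.
move=> x xA; exists (cast_ord cardA (enum_rank_in xA x)).
by rewrite cast_ordK enum_rankK_in.
Qed.

End Chains.

Section RankFunction.
Context {d : Order.disp_t} {L : finTBLatticeType d} {rho : L -> nat}.
Hypothesis rho_rank : is_rank_function rho.

Lemma rank_bot : rho \bot = 0%N.
Proof. by case: rho_rank. Qed.

Lemma rank_covers {x y} : covers x y -> rho y = (rho x).+1.
Proof. by case: rho_rank => _; apply. Qed.

Lemma rank_atom {a} : atom a -> rho a = 1%N.
Proof. by move/rank_covers; rewrite rank_bot. Qed.

Lemma rank_lt {x y} : x < y -> (rho x < rho y)%N.
Proof.
have [k] := ubnP #|[set z | (x < z) && (z <= y)]|.
elim: k x y => [|k IH] x y // ltk xy.
have [/rank_covers -> //|] := boolP (covers x y).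
rewrite /covers xy => /forallPn[z]; rewrite negbK => /andP[xz zy].
have sub_interval x' y' : x <= x' -> y' <= y -> x' < y' ->
    (x < x') || (y' < y) -> (#|[set z | (x' < z)%O && (z <= y')%O]| < k)%N.
  move=> xx' y'y x'y' strict; rewrite -ltnS (leq_trans _ ltk) // ltnS.
  apply: proper_card; apply/properP; split.
    apply/subsetP => w; rewrite !inE => /andP[x'w wy'].
    by rewrite (le_lt_trans xx' x'w) (le_trans wy' y'y).
  case/orP: strict => [ltxx'|lty'y].
    by exists x'; rewrite !inE ?ltxx ?ltxx' ?(le_trans (ltW x'y') y'y).
  by exists y; rewrite !inE ?xy ?lexx ?lt_geF ?andbF.
apply: (@ltn_trans (rho z)); apply: IH => //; apply: sub_interval;
  by rewrite ?lexx ?ltW ?xz ?zy ?orbT.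
Qed.

Lemma rank_le {x y} : x <= y -> (rho x <= rho y)%N.
Proof. by rewrite le_eqVlt => /orP[/eqP->|/rank_lt/ltnW]. Qed.

Lemma chain_min {C : {set L}} : C != set0 -> chainb (<=%O : rel L) C ->
  exists2 m, m \in C & forall c, c \in C -> m <= c.
Proof.
case/set0Pn => c0 c0C chC.
have [m mC mmin] := @arg_minnP _ c0 (mem C) rho c0C.
exists m => // c cC.
move/forallP: chC => /(_ c) /implyP /(_ cC) /forallP /(_ m) /implyP /(_ mC).
case/orP => // cm; have [-> //|neq] := eqVneq c m.
by have := mmin c cC; rewrite leqNgt rank_lt // lt_neqAle neq cm.
Qed.

End RankFunction.

Section IndependentAtoms.
Context {d : Order.disp_t} {L : finTBLatticeType d} {rho : L -> nat}.
Hypotheses (rho_rank : is_rank_function rho) (L_atomic : atomic_lattice L).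
Hypothesis rho_semimodular :
  forall x y : L, (rho (x `|` y) + rho (x `&` y) <= rho x + rho y)%N.
Context {I : finType} (g : I -> L).
Hypothesis g_onto : forall a, atom a -> exists i, g i = a.

Lemma exists_atom_not_below x y : x < y ->
  exists2 a : L, atom a & (a <= y) && ~~ (a <= x).
Proof.
move=> xy; have [/existsP[a /and3P[aa ay anx]] | /existsPn none] :=
  boolP [exists a, [&& atom a, a <= y & ~~ (a <= x)]].
  by exists a; rewrite ?ay.
suff : y <= x by rewrite lt_geF.
rewrite (L_atomic y); apply/joinsP => a /andP[aa ay].
by move: (none a); rewrite aa ay negbK.
Qed.

Lemma rank_join_atom a x : atom a -> ~~ (a <= x) -> rho (a `|` x) = (rho x).+1.
Proof.
move=> aa anx; apply/eqP; rewrite eqn_leq (rank_lt rho_rank) ?andbT.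
  by have := rho_semimodular a x; rewrite (rank_atom rho_rank aa); lia.
rewrite lt_neqAle leUr andbT; apply: contraNneq anx => ->; exact: leUl.
Qed.

Definition join_atoms (A : {set I}) : L := \join_(i in A) g i.

Definition independent (A : {set I}) : bool := #|A| == rho (join_atoms A).

Lemma join_atoms0 : join_atoms set0 = \bot.
Proof. by rewrite /join_atoms big_set0. Qed.

Lemma independent0 : independent set0.
Proof. by rewrite /independent join_atoms0 cards0 (rank_bot rho_rank). Qed.

Lemma join_atoms_setU1 i A : join_atoms (i |: A) = g i `|` join_atoms A.
Proof.
have [iA | iA] := boolP (i \in A); last by rewrite /join_atoms big_setU1.
by rewrite (setUidPr _) ?sub1set // join_r // joins_sup.
Qed.

Lemma independent_setU1 {i A} : independent A -> atom (g i) ->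
  ~~ (g i <= join_atoms A) -> independent (i |: A).
Proof.
move=> /eqP indA gi_atom gi_nle.
have iA : i \notin A by apply: contra gi_nle => iA; exact: joins_sup.
by rewrite /independent join_atoms_setU1 rank_join_atom // cardsU1 iA indA.
Qed.

Lemma independent_extend {A y} : independent A -> join_atoms A <= y ->
  exists B : {set I}, [/\ A \subset B, independent B & join_atoms B = y].
Proof.
have [k] := ubnP (rho y - rho (join_atoms A)).
elim: k A => [|k IH] A // ltk indA Ay.
have [<- | neq] := eqVneq (join_atoms A) y; first by exists A.
have [a aa /andP[ay anA]] := exists_atom_not_below (join_atoms A) y
  ltac:(by rewrite lt_neqAle neq).
have [i gi] := g_onto _ aa; rewrite -gi in aa ay anA.
have indB := independent_setU1 indA aa anA.
have By : join_atoms (i |: A) <= y by rewrite join_atoms_setU1 leUx ay.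
have AB : join_atoms A < join_atoms (i |: A).
  by rewrite join_atoms_setU1 lt_neqAle leUr andbT;
    apply: contraNneq anA => ->; exact: leUl.
have [|C [BC indC Cy]] := IH (i |: A) _ indB By.
  by have := rank_lt rho_rank AB; have := rank_le rho_rank By; lia.
by exists C; split=> //; apply: subset_trans BC; exact: subsetUr.
Qed.

Lemma chain_lift_above {C : {set L}} {A0} :
  chainb (<=%O : rel L) C -> independent A0 ->
  (forall c, c \in C -> join_atoms A0 <= c) ->
  exists D : {set {set I}},
    [/\ join_atoms @: D = C, {in D, forall A : {set I}, independent A},
        chainb (fun A B : {set I} => A \subset B) D
      & {in D, forall A : {set I}, A0 \subset A}].
Proof.
have [k] := ubnP #|C|; elim: k C A0 => [|k IH] C A0 // ltk chC indA0 A0C.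
have [-> | neC] := eqVneq C set0.
  exists set0; rewrite imset0; split => // [A | | A]; rewrite ?inE //.
  by apply/forallP => A; rewrite inE.
have [m mC mmin] := chain_min rho_rank neC chC.
have [B [A0B indB Bm]] := independent_extend indA0 (A0C m mC).
have [||D [DC indD chD BD]] := IH (C :\ m) B _ (chainbS (subsetDl C _) chC) indB.
- by rewrite (cardsD1 m C) mC in ltk.
- by move=> c /setD1P[_ cC]; rewrite Bm mmin.
exists (B |: D); split.
- by rewrite imsetU1 DC Bm setD1K.
- by move=> A /setU1P[-> | /indD].
- exact: chainbU1 BD chD.
- by move=> A /setU1P[-> // | /BD]; apply: subset_trans.
Qed.

Lemma chain_lift {C : {set L}} : chainb (<=%O : rel L) C ->
  exists D : {set {set I}},
    [/\ join_atoms @: D = C, {in D, forall A : {set I}, #|A| = rho (join_atoms A)}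
       & chainb (fun A B : {set I} => A \subset B) D].
Proof.
move=> chC; have [|D [DC indD chD _]] := chain_lift_above chC independent0.
  by move=> c _; rewrite join_atoms0 le0x.
by exists D; split=> // A /indD /eqP.
Qed.

End IndependentAtoms.

Theorem corollary3p3 (d : Order.disp_t) (L : finTBLatticeType d)
    (rho : L -> nat) (r n : nat) :
  geometric rho ->
  rho Order.top = r.+1 ->
  #|[set a : L | atom a]| = n ->
  forall S : {set 'I_r.+1}, S \subset [set i : 'I_r.+1 | (0 < i)%N] ->
  (fS (fun _ : L => true) (<=%O : rel L) rho S
   <= fS (@trB_carrier r n) (@trB_le n) (@trB_rank r n) S)%N.
Proof.
move=> [rho_rank L_atomic rho_semimodular] _ n_atoms S _.
have [g [_ g_onto]] := exists_ord_enumeration n_atoms.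
have {}g_onto a : atom a -> exists i, g i = a by move=> aa; apply: g_onto; rewrite inE.
pose lift_top (o : option {set 'I_n}) : L :=
  if o is Some A then join_atoms g A else \top.
rewrite /fS; set Y := (X in (_ <= #|X|)%N).
apply: leq_trans (leq_imset_card (fun E : {set option {set 'I_n}} => lift_top @: E) Y).
apply/subset_leq_card/subsetP => C; rewrite inE => /and3P[_ chC rkC].
have [D [DC card_rank chD]] := chain_lift rho_rank L_atomic rho_semimodular g g_onto chC.
have rkD : ranks_eq (fun A : {set 'I_n} => #|A|) D S.
  by rewrite -(ranks_eq_imset card_rank) DC.
apply/imsetP; exists (Some @: D); last by rewrite -imset_comp -DC.
rewrite inE; apply/and3P; split.
- apply/subsetP => _ /imsetP[A AD ->]; rewrite unfold_in /=.
  case/andP: rkD => /forallP /(_ A) /implyP /(_ AD) /existsP[i /andP[_ /eqP ->]] _.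
  by rewrite -ltnS ltn_ord.
- by rewrite chainb_imset.
- by rewrite (ranks_eq_imset (f := Some) (rkT := fun A : {set 'I_n} => #|A|)).
Qed.
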